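(* Let $\Sigma$ be a first-order signature not containing the constant symbols $a,b$, and let $\alpha$ be a first-order (classical) sentence in $\Sigma$. Consider formulas over $\Sigma\cup\{a,b\}$ with $a,b$ non-rigid constants, and let $\eta := \big(\mathrm{dep}(a,b)\wedge \mathrm{dep}(b,a)\wedge \exists^{\mathsf i}x\,(x\neq b)\big)\to \exists^{\mathsf i}x\,(x\neq a)$, $\theta:=\exists^{\mathsf i}x\,\exists^{\mathsf i}y\,\neg(x=a\wedge y=b)$, and $\rho:=\forall x\forall y\,?(x=y)$. The following are equivalent: (1) $\alpha$ is finitely valid in first-order logic, i.e. true in every finite $\Sigma$-structure; (2) $\eta\to(\alpha\mathbin{\vee\!\!\!\vee}\theta)$ is id-valid in InqBQ; (3) $(\rho\wedge\eta)\to(\alpha\mathbin{\vee\!\!\!\vee}\theta)$ is valid in InqBQ.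
   Context: Inquisitive first-order logic InqBQ. A signature consists of predicate symbols and function symbols, each with an arity; function symbols are either rigid or non-rigid, and function symbols of arity $0$ are constant symbols. Terms are built from variables and function symbols as usual. Formulas are given by $\phi ::= P(t_1,\dots,t_n)\mid (t=t')\mid \bot\mid (\phi\wedge\phi)\mid(\phi\mathbin{\vee\!\!\!\vee}\phi)\mid(\phi\to\phi)\mid\forall x\phi\mid\exists^{\mathsf i}x\phi$, where $\mathbin{\vee\!\!\!\vee}$ is inquisitive disjunction and $\exists^{\mathsf i}$ is the inquisitive existential quantifier. Abbreviations: $\neg\phi:=\phi\to\bot$, $(t\neq t'):=\neg(t=t')$, $?\phi:=\phi\mathbin{\vee\!\!\!\vee}\neg\phi$; classical $\vee,\exists$ are $\neg(\neg\phi\wedge\neg\psi)$ and $\neg\forall x\neg\phi$. Formulas without $\mathbin{\vee\!\!\!\vee}$ and $\exists^{\mathsf i}$ are called classical; these are identified with ordinary first-order formulas. A first-order information model is $M=(W,D,I,\sim)$ with $W$ a non-empty set of worlds, $D$ a non-empty domain, $I$ assigning to each world $w$ an interpretation $I_w$ giving each $n$-ary predicate $P$ a relation $P_w\subseteq D^n$ and each $n$-ary function symbol $f$ a function $f_w:D^n\to D$ (rigid symbols get the same interpretation at every world), and $\sim$ assigning to each world $w$ an equivalence relation $\sim_w$ on $D$ that is a congruence for all $P_w$ and $f_w$. An id-model is one where every $\sim_w$ is the identity on $D$. Term values $[t]^g_w$ are defined as usual. Support at a state $s\subseteq W$ under assignment $g$: $M,s\models_g P(t_1,\dots,t_n)$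 iff $([t_1]^g_w,\dots,[t_n]^g_w)\in P_w$ for all $w\in s$; $M,s\models_g t=t'$ iff $[t]^g_w\sim_w[t']^g_w$ for all $w\in s$; $M,s\models_g\bot$ iff $s=\emptyset$; $\wedge$ is conjunction of support; $M,s\models_g\phi\mathbin{\vee\!\!\!\vee}\psi$ iff $M,s\models_g\phi$ or $M,s\models_g\psi$; $M,s\models_g\phi\to\psi$ iff for every $t\subseteq s$, $M,t\models_g\phi$ implies $M,t\models_g\psi$; $M,s\models_g\forall x\phi$ iff $M,s\models_{g[x\mapsto d]}\phi$ for all $d\in D$; $M,s\models_g\exists^{\mathsf i}x\phi$ iff $M,s\models_{g[x\mapsto d]}\phi$ for some $d\in D$. A formula is valid if it is supported in every model, state and assignment; id-valid if it is supported in every id-model, state and assignment. For a term $t$, $\lambda t:=\exists^{\mathsf i}x\,(x=t)$ with $x$ a variable not occurring in $t$, and $\mathrm{dep}(t,t'):=\lambda t\to\lambda t'$. *)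

From Stdlib Require Import List Arith Fin RelationClasses.

Record signature : Type := {
  psym : Type;
  fsym : Type;
  parity : psym -> nat;
  farity : fsym -> nat;
  rigid : fsym -> Prop
}.

Inductive term (S : signature) : Type :=
| Var : nat -> term S
| App : forall f : fsym S, (Fin.t (farity S f) -> term S) -> term S.
Arguments Var {S} _.
Arguments App {S} f _.

Inductive form (S : signature) : Type :=
| Pred : forall P : psym S, (Fin.t (parity S P) -> term S) -> form S
| Eq : term S -> term S -> form S
| Bot : form S
| And : form S -> form S -> form S
| IOr : form S -> form S -> form S
| Imp : form S -> form S -> form S
| All : nat -> form S -> form S
| IEx : nat -> form S -> form S.
Arguments Pred {S} P _.
Arguments Eq {S} _ _.
Arguments Bot {S}.
Arguments And {S} _ _.
Arguments IOr {S} _ _.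
Arguments Imp {S} _ _.
Arguments All {S} _ _.
Arguments IEx {S} _ _.

Definition Neg {S} (p : form S) : form S := Imp p Bot.
Definition Neq {S} (t t' : term S) : form S := Neg (Eq t t').
Definition Quest {S} (p : form S) : form S := IOr p (Neg p).

Fixpoint is_classical {S} (p : form S) : Prop :=
  match p with
  | Pred _ _ | Eq _ _ | Bot => True
  | And a b | Imp a b => is_classical a /\ is_classical b
  | IOr _ _ | IEx _ _ => False
  | All _ a => is_classical a
  end.

Fixpoint occurs_t {S} (x : nat) (t : term S) : Prop :=
  match t with
  | Var y => x = y
  | App f args => exists i, occurs_t x (args i)
  end.

Fixpoint free_in {S} (x : nat) (p : form S) : Prop :=
  match p with
  | Pred _ args => exists i, occurs_t x (args i)
  | Eq t t' => occurs_t x t \/ occurs_t x t'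
  | Bot => False
  | And a b | IOr a b | Imp a b => free_in x a \/ free_in x b
  | All y a | IEx y a => x <> y /\ free_in x a
  end.

Definition sentence {S} (p : form S) : Prop := forall x, ~ free_in x p.

Definition upd {D : Type} (g : nat -> D) (x : nat) (d : D) : nat -> D :=
  fun y => if Nat.eqb y x then d else g y.

Record structure (S : signature) : Type := {
  sdom : Type;
  sdom_ne : inhabited sdom;
  spint : forall P : psym S, (Fin.t (parity S P) -> sdom) -> Prop;
  sfint : forall f : fsym S, (Fin.t (farity S f) -> sdom) -> sdom
}.
Arguments sdom {S} _.
Arguments spint {S} _ _ _.
Arguments sfint {S} _ _ _.

Fixpoint seval {S} (A : structure S) (g : nat -> sdom A) (t : term S) : sdom A :=
  match t with
  | Var x => g x
  | App f args => sfint A f (fun i => seval A g (args i))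
  end.

(** Tarskian satisfaction (for classical formulas; inquisitive connectives
    are read classically, which is irrelevant for classical formulas). *)
Fixpoint sat {S} (A : structure S) (p : form S) (g : nat -> sdom A) : Prop :=
  match p with
  | Pred P args => spint A P (fun i => seval A g (args i))
  | Eq t t' => seval A g t = seval A g t'
  | Bot => False
  | And a b => sat A a g /\ sat A b g
  | IOr a b => sat A a g \/ sat A b g
  | Imp a b => sat A a g -> sat A b g
  | All x a => forall d, sat A a (upd g x d)
  | IEx x a => exists d, sat A a (upd g x d)
  end.

Definition finite_structure {S} (A : structure S) : Prop :=
  exists l : list (sdom A), forall d, In d l.

Definition finitely_valid {S} (p : form S) : Prop :=
  forall (A : structure S), finite_structure A -> forall g, sat A p g.

Record model (S : signature) : Type := {
  W : Type;
  D : Type;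
  W_ne : inhabited W;
  D_ne : inhabited D;
  pint : W -> forall P : psym S, (Fin.t (parity S P) -> D) -> Prop;
  fint : W -> forall f : fsym S, (Fin.t (farity S f) -> D) -> D;
  sim : W -> D -> D -> Prop;
  sim_equiv : forall w, Equivalence (sim w);
  sim_cong_p : forall w P (u v : Fin.t (parity S P) -> D),
      (forall i, sim w (u i) (v i)) -> pint w P u -> pint w P v;
  sim_cong_f : forall w f (u v : Fin.t (farity S f) -> D),
      (forall i, sim w (u i) (v i)) -> sim w (fint w f u) (fint w f v);
  fint_rigid : forall f, rigid S f ->
      forall w w' (u : Fin.t (farity S f) -> D), fint w f u = fint w' f u
}.
Arguments W {S} _.
Arguments D {S} _.
Arguments pint {S} _ _ _ _.
Arguments fint {S} _ _ _ _.
Arguments sim {S} _ _ _ _.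

Fixpoint eval {S} (M : model S) (w : W M) (g : nat -> D M) (t : term S) : D M :=
  match t with
  | Var x => g x
  | App f args => fint M w f (fun i => eval M w g (args i))
  end.

Fixpoint supp {S} (M : model S) (p : form S) (s : W M -> Prop) (g : nat -> D M) : Prop :=
  match p with
  | Pred P args => forall w, s w -> pint M w P (fun i => eval M w g (args i))
  | Eq t t' => forall w, s w -> sim M w (eval M w g t) (eval M w g t')
  | Bot => forall w, ~ s w
  | And a b => supp M a s g /\ supp M b s g
  | IOr a b => supp M a s g \/ supp M b s g
  | Imp a b => forall t : W M -> Prop, (forall w, t w -> s w) ->
                 supp M a t g -> supp M b t g
  | All x a => forall d, supp M a s (upd g x d)
  | IEx x a => exists d, supp M a s (upd g x d)
  end.

Definition valid {S} (p : form S) : Prop :=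
  forall (M : model S) (s : W M -> Prop) (g : nat -> D M), supp M p s g.

Definition id_model {S} (M : model S) : Prop :=
  forall w d e, sim M w d e <-> d = e.

Definition id_valid {S} (p : form S) : Prop :=
  forall (M : model S), id_model M ->
    forall (s : W M -> Prop) (g : nat -> D M), supp M p s g.

Definition ext_sig (S : signature) : signature := {|
  psym := psym S;
  fsym := (fsym S + bool)%type;
  parity := parity S;
  farity := fun f => match f with inl f => farity S f | inr _ => 0 end;
  rigid := fun f => match f with inl f => rigid S f | inr _ => False end
|}.

Fixpoint lift_t {S} (t : term S) : term (ext_sig S) :=
  match t with
  | Var x => Var x
  | App f args => @App (ext_sig S) (inl f) (fun i => lift_t (args i))
  end.

Fixpoint lift {S} (p : form S) : form (ext_sig S) :=
  match p with
  | Pred P args => @Pred (ext_sig S) P (fun i => lift_t (args i))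
  | Eq t t' => Eq (lift_t t) (lift_t t')
  | Bot => Bot
  | And a b => And (lift a) (lift b)
  | IOr a b => IOr (lift a) (lift b)
  | Imp a b => Imp (lift a) (lift b)
  | All x a => All x (lift a)
  | IEx x a => IEx x (lift a)
  end.

Definition const_a (S : signature) : term (ext_sig S) :=
  @App (ext_sig S) (inr true) (fun i : Fin.t 0 => Fin.case0 (fun _ => term (ext_sig S)) i).
Definition const_b (S : signature) : term (ext_sig S) :=
  @App (ext_sig S) (inr false) (fun i : Fin.t 0 => Fin.case0 (fun _ => term (ext_sig S)) i).

Definition vx {S} : term S := Var 0.
Definition vy {S} : term S := Var 1.

(** lambda t := exists^i x (x = t), for t a constant (x does not occur in t). *)
Definition lam {S} (t : term S) : form S := IEx 0 (Eq vx t).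
Definition dep {S} (t t' : term S) : form S := Imp (lam t) (lam t').

Definition eta (S : signature) : form (ext_sig S) :=
  let a := const_a S in let b := const_b S in
  Imp (And (dep a b) (And (dep b a) (IEx 0 (Neq vx b))))
      (IEx 0 (Neq vx a)).

Definition theta (S : signature) : form (ext_sig S) :=
  IEx 0 (IEx 1 (Neg (And (Eq vx (const_a S)) (Eq vy (const_b S))))).

Definition rho (S : signature) : form (ext_sig S) :=
  All 0 (All 1 (Quest (Eq vx vy))).

(* A state of an InqBQ model is read as a family of classical structures, one
   per world.  In the id-model whose worlds are the pairs of elements of a
   finite structure A (the values of a and b), theta fails, and eta holds
   because, if a took every value, dep(b,a) would make "the value of b at a
   world where a = x" an injective self-map of the domain, hence onto, so b
   could avoid no value; thus alpha holds in A.
   Conversely, under rho all worlds of a state share one equivalence, and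
   when theta fails every pair of classes occurs as the values of a and b;
   eta then forces every injective self-map of the quotient to be onto, so
   the quotient is finite and finite validity of alpha applies at each world. *)

From Stdlib Require Import List Arith Lia RelationClasses Classical ClassicalEpsilon
  FunctionalExtensionality PropExtensionality ProofIrrelevance FinFun.

Lemma nat_injection_of_not_Finite (X : Type) :
  ~ Finite X -> exists e : nat -> X, Injective e.
Proof.
  intros HX.
  assert (fresh : forall l : list X, exists x, ~ In x l).
  { intros l. apply NNPP; intros Hl. apply HX. exists l. intros x.
    apply NNPP; intros Hx. apply Hl. exists x. exact Hx. }
  destruct (choice (fun l x => ~ In x l) fresh) as [pick pick_fresh].
  pose (L := fix L n := match n with 0 => nil | S n => pick (L n) :: L n end).
  exists (fun n => pick (L n)).
  assert (earlier : forall m n, m < n -> In (pick (L m)) (L n)).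
  { induction n as [|n IHn]; intros Hmn; [lia|].
    destruct (Nat.eq_dec m n) as [->|Hne]; [left; reflexivity|].
    right. apply IHn. lia. }
  intros m n Hmn. destruct (lt_eq_lt_dec m n) as [[Hlt|Heq]|Hlt]; [|exact Heq|].
  - exfalso. apply (pick_fresh (L n)). rewrite <- Hmn. apply earlier, Hlt.
  - exfalso. apply (pick_fresh (L m)). rewrite Hmn. apply earlier, Hlt.
Qed.

(* The shift [e n |-> e (n + 1)] on the range of [e], identity elsewhere, misses [e 0]. *)
Lemma not_surjective_injection_of_nat_injection (X : Type) (e : nat -> X) :
  Injective e -> exists f : X -> X, Injective f /\ ~ Surjective f.
Proof.
  intros e_inj.
  assert (index : forall x, exists o : option nat,
             match o with Some n => x = e n | None => forall n, x <> e n end).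
  { intros x. destruct (classic (exists n, x = e n)) as [[n Hn]|Hx].
    - exists (Some n). exact Hn.
    - exists None. intros n Hn. apply Hx. exists n. exact Hn. }
  destruct (choice _ index) as [idx idx_spec].
  exists (fun x => match idx x with Some n => e (S n) | None => x end). split.
  - intros x y. generalize (idx_spec x) (idx_spec y).
    destruct (idx x) as [m|], (idx y) as [n|]; intros Hx Hy Hxy.
    + apply e_inj in Hxy. injection Hxy as ->. congruence.
    + exfalso. apply (Hy (S m)). symmetry. exact Hxy.
    + exfalso. apply (Hx (S n)). exact Hxy.
    + exact Hxy.
  - intros f_surj. destruct (f_surj (e 0)) as [x Hx]. revert Hx.
    generalize (idx_spec x). destruct (idx x) as [n|]; intros Hn Hx.
    + apply e_inj in Hx. discriminate.
    + apply (Hn 0). exact Hx.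
Qed.

Lemma Finite_of_Injective_Surjective (X : Type) :
  (forall f : X -> X, Injective f -> Surjective f) -> Finite X.
Proof.
  intros H. apply NNPP; intros HX.
  destruct (nat_injection_of_not_Finite X HX) as [e e_inj].
  destruct (not_surjective_injection_of_nat_injection X e e_inj) as [f [f_inj f_nsurj]].
  exact (f_nsurj (H f f_inj)).
Qed.

Section Quotient.

Variables (X : Type) (R : X -> X -> Prop).

Definition quot : Type := {c : X -> Prop | exists x, c = R x}.

Definition cls (x : X) : quot := exist _ (R x) (ex_intro _ x eq_refl).

Lemma cls_surj : Surjective cls.
Proof.
  intros [c [x ->]]. exists x. reflexivity.
Qed.

Definition repr (q : quot) : X :=
  proj1_sig (constructive_indefinite_description _ (cls_surj q)).

Lemma cls_repr (q : quot) : cls (repr q) = q.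
Proof. exact (proj2_sig (constructive_indefinite_description _ (cls_surj q))). Qed.

Hypothesis R_equiv : Equivalence R.

Lemma cls_eq (x y : X) : cls x = cls y <-> R x y.
Proof.
  split.
  - intros Hxy. apply (f_equal (fun q => proj1_sig q y)) in Hxy. simpl in Hxy.
    rewrite Hxy. reflexivity.
  - intros Hxy. apply subset_eq_compat.
    extensionality z. apply propositional_extensionality.
    split; intros H; [transitivity x | transitivity y]; auto; symmetry; exact Hxy.
Qed.

Lemma repr_cls (x : X) : R (repr (cls x)) x.
Proof. apply cls_eq. apply cls_repr. Qed.

End Quotient.

Arguments cls {X} R x.
Arguments repr {X} R q.

Definition term_ind_nested (S : signature) (P : term S -> Prop)
  (HVar : forall n, P (Var n))
  (HApp : forall f args, (forall i, P (args i)) -> P (App f args)) :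
  forall t, P t :=
  fix F t := match t with
  | Var n => HVar n
  | App f args => HApp f args (fun i => F (args i))
  end.

Lemma upd_map {X Y : Type} (h : X -> Y) (g : nat -> X) (x : nat) (d : X) :
  (fun n => h (upd g x d n)) = upd (fun n => h (g n)) x (h d).
Proof.
  extensionality n. unfold upd. destruct (Nat.eqb n x); reflexivity.
Qed.

Section Transfer.

Variables (S : signature) (M : model (ext_sig S)) (t : W M -> Prop).
Variables (A : W M -> structure S) (pi : forall w, D M -> sdom (A w)).

Hypothesis pi_surj : forall w, t w -> Surjective (pi w).
Hypothesis sim_pi : forall w, t w -> forall d e, sim M w d e <-> pi w d = pi w e.
Hypothesis pint_pi : forall w, t w -> forall P u,
  pint M w P u <-> spint (A w) P (fun i => pi w (u i)).
Hypothesis fint_pi : forall w, t w -> forall f u,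
  pi w (fint M w (inl f) u) = sfint (A w) f (fun i => pi w (u i)).

Lemma eval_lift_t (w : W M) (g : nat -> D M) (tm : term S) : t w ->
  pi w (eval M w g (lift_t tm)) = seval (A w) (fun n => pi w (g n)) tm.
Proof.
  intros Hw. induction tm as [n|f args IH] using term_ind_nested; [reflexivity|].
  simpl. rewrite fint_pi by exact Hw. f_equal. extensionality i. apply IH.
Qed.

Lemma eval_lift_args (w : W M) (g : nat -> D M) (k : nat) (args : Fin.t k -> term S) :
  t w ->
  (fun i => pi w (eval M w g (lift_t (args i)))) =
  (fun i => seval (A w) (fun n => pi w (g n)) (args i)).
Proof. intros Hw. extensionality i. apply eval_lift_t, Hw. Qed.

Lemma supp_lift_iff_sat (phi : form S) : is_classical phi ->
  forall s g, (forall w, s w -> t w) ->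
  (supp M (lift phi) s g <-> forall w, s w -> sat (A w) phi (fun n => pi w (g n))).
Proof.
  induction phi as [P args|t1 t2| |a IHa b IHb|a IHa b IHb|a IHa b IHb|x a IHa|x a IHa];
    intros Hc s g Hst; simpl in Hc |- *; try contradiction.
  - split; intros H w Hw; specialize (H w Hw).
    + rewrite pint_pi, eval_lift_args in H by auto. exact H.
    + rewrite pint_pi, eval_lift_args by auto. exact H.
  - split; intros H w Hw; specialize (H w Hw).
    + rewrite sim_pi, !eval_lift_t in H by auto. exact H.
    + rewrite sim_pi, !eval_lift_t by auto. exact H.
  - firstorder.
  - destruct Hc as [Ha Hb]. rewrite IHa, IHb by auto. firstorder.
  - destruct Hc as [Ha Hb]. split.
    + intros H w Hw Haw.
      assert (Hsingle : forall w', w' = w -> s w') by (intros w' ->; exact Hw).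
      specialize (H (fun w' => w' = w) Hsingle).
      rewrite (IHa Ha), (IHb Hb) in H by (intros w' Hw'; apply Hst, Hsingle, Hw'); auto.
      apply H; [intros w' -> |]; auto.
    + intros H u Hu. rewrite IHa, IHb by auto. intros Ha' w Hw. apply H; auto.
  - split.
    + intros H w Hw q. destruct (pi_surj w (Hst w Hw) q) as [d <-].
      specialize (H d). rewrite IHa in H by auto. rewrite <- upd_map. apply H, Hw.
    + intros H d. rewrite IHa by auto. intros w Hw. rewrite upd_map. apply H, Hw.
Qed.

End Transfer.

Section Constants.

Variables (S : signature) (M : model (ext_sig S)).

Definition a_val (w : W M) : D M := fint M w (inr true) (Fin.case0 (fun _ => D M)).
Definition b_val (w : W M) : D M := fint M w (inr false) (Fin.case0 (fun _ => D M)).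

Lemma eval_const_a (w : W M) (g : nat -> D M) : eval M w g (const_a S) = a_val w.
Proof. unfold a_val. simpl. f_equal. extensionality i. apply Fin.case0, i. Qed.

Lemma eval_const_b (w : W M) (g : nat -> D M) : eval M w g (const_b S) = b_val w.
Proof. unfold b_val. simpl. f_equal. extensionality i. apply Fin.case0, i. Qed.

Definition determined (c : W M -> D M) (s : W M -> Prop) : Prop :=
  exists d, forall w, s w -> sim M w d (c w).

Definition avoids (c : W M -> D M) (s : W M -> Prop) : Prop :=
  exists d, forall w, s w -> ~ sim M w d (c w).

Definition depends (c c' : W M -> D M) (s : W M -> Prop) : Prop :=
  forall u, (forall w, u w -> s w) -> determined c u -> determined c' u.

Lemma supp_Neg_pointwise (p : form (ext_sig S)) (P : W M -> Prop) (g : nat -> D M) :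
  (forall u, supp M p u g <-> forall w, u w -> P w) ->
  forall s, supp M (Neg p) s g <-> forall w, s w -> ~ P w.
Proof.
  intros Hp s. cbn [supp Neg]. split.
  - intros H w Hw Pw. apply (H (fun w' => w' = w)) with (w := w); auto.
    + intros w' ->. exact Hw.
    + apply Hp. intros w' ->. exact Pw.
  - intros H u Hu Hpu w Hw. apply (H w); auto. apply (proj1 (Hp u) Hpu w Hw).
Qed.

Section Constant_term.

Variables (c : term (ext_sig S)) (v : W M -> D M).
Hypothesis eval_c : forall w g, eval M w g c = v w.

Lemma supp_lam (s : W M -> Prop) (g : nat -> D M) :
  supp M (lam c) s g <-> determined v s.
Proof.
  cbn. unfold determined. setoid_rewrite eval_c. reflexivity.
Qed.

Lemma supp_avoid (s : W M -> Prop) (g : nat -> D M) :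
  supp M (IEx 0 (Neq vx c)) s g <-> avoids v s.
Proof.
  assert (pointwise : forall d, supp M (Neq vx c) s (upd g 0 d) <->
                                forall w, s w -> ~ sim M w d (v w)).
  { intros d. apply supp_Neg_pointwise. intros u. cbn. setoid_rewrite eval_c. reflexivity. }
  cbn [supp]. setoid_rewrite pointwise. reflexivity.
Qed.

End Constant_term.

Lemma supp_eta (s : W M -> Prop) (g : nat -> D M) :
  supp M (eta S) s g <->
  forall u, (forall w, u w -> s w) ->
    depends a_val b_val u -> depends b_val a_val u -> avoids b_val u -> avoids a_val u.
Proof.
  unfold eta, dep, depends. cbn [supp].
  setoid_rewrite (supp_lam (const_a S) a_val eval_const_a).
  setoid_rewrite (supp_lam (const_b S) b_val eval_const_b).
  setoid_rewrite (supp_avoid (const_a S) a_val eval_const_a).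
  setoid_rewrite (supp_avoid (const_b S) b_val eval_const_b).
  firstorder.
Qed.

Lemma supp_theta (s : W M -> Prop) (g : nat -> D M) :
  supp M (theta S) s g <->
  exists d e, forall w, s w -> ~ (sim M w d (a_val w) /\ sim M w e (b_val w)).
Proof.
  assert (pointwise : forall d e,
    supp M (Neg (And (Eq vx (const_a S)) (Eq vy (const_b S)))) s (upd (upd g 0 d) 1 e) <->
    forall w, s w -> ~ (sim M w d (a_val w) /\ sim M w e (b_val w))).
  { intros d e. apply supp_Neg_pointwise. intros u. cbn [supp].
    setoid_rewrite eval_const_a. setoid_rewrite eval_const_b. firstorder. }
  unfold theta. cbn [supp]. setoid_rewrite pointwise. reflexivity.
Qed.

Lemma supp_rho (s : W M -> Prop) (g : nat -> D M) :
  supp M (rho S) s g <->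
  forall d e, (forall w, s w -> sim M w d e) \/ (forall w, s w -> ~ sim M w d e).
Proof.
  assert (pointwise : forall d e,
    supp M (Neg (Eq vx vy)) s (upd (upd g 0 d) 1 e) <-> forall w, s w -> ~ sim M w d e).
  { intros d e. apply supp_Neg_pointwise. reflexivity. }
  unfold rho, Quest. cbn [supp]. setoid_rewrite pointwise. reflexivity.
Qed.

End Constants.

Arguments a_val {S} M w.
Arguments b_val {S} M w.
Arguments determined {S} M c s.
Arguments avoids {S} M c s.
Arguments depends {S} M c c' s.

Lemma supp_rho_uniform (S : signature) (M : model (ext_sig S)) s g :
  supp M (rho S) s g ->
  forall w w', s w -> s w' -> forall d e, sim M w d e <-> sim M w' d e.
Proof.
  intros Hrho w w' Hw Hw' d e. rewrite supp_rho in Hrho.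
  destruct (Hrho d e) as [H|H]; split; intros Hde; auto.
  - exfalso. exact (H w Hw Hde).
  - exfalso. exact (H w' Hw' Hde).
Qed.

Lemma id_model_supp_rho (S : signature) (M : model (ext_sig S)) s g :
  id_model M -> supp M (rho S) s g.
Proof.
  intros Hid. apply supp_rho. intros d e. destruct (classic (d = e)) as [<-|Hne].
  - left. intros w _. apply Hid. reflexivity.
  - right. intros w _ Hde. apply Hne, (Hid w), Hde.
Qed.

Section Uniform_state.

Variables (S : signature) (M : model (ext_sig S)) (Q : Type) (pi : D M -> Q).
Variable t : W M -> Prop.

Hypothesis pi_surj : Surjective pi.
Hypothesis sim_pi : forall w, t w -> forall d e, sim M w d e <-> pi d = pi e.

Lemma determined_iff_constant (c : W M -> D M) (s : W M -> Prop) :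
  (forall w, s w -> t w) ->
  determined M c s <-> forall w w', s w -> s w' -> pi (c w) = pi (c w').
Proof.
  intros Hst. split.
  - intros [d Hd] w w' Hw Hw'.
    assert (Ew : pi d = pi (c w)) by (rewrite <- (sim_pi w); auto).
    assert (Ew' : pi d = pi (c w')) by (rewrite <- (sim_pi w'); auto).
    congruence.
  - intros Hc. destruct (classic (exists w0, s w0)) as [[w0 Hw0]|Hempty].
    + exists (c w0). intros w Hw. rewrite (sim_pi w); auto.
    + destruct (D_ne _ M) as [d]. exists d. intros w Hw. exfalso. eauto.
Qed.

Lemma avoids_iff (c : W M -> D M) (s : W M -> Prop) :
  (forall w, s w -> t w) ->
  avoids M c s <-> exists q, forall w, s w -> pi (c w) <> q.
Proof.
  intros Hst. split.
  - intros [d Hd]. exists (pi d). intros w Hw E. apply (Hd w Hw). rewrite (sim_pi w); auto.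
  - intros [q Hq]. destruct (pi_surj q) as [d <-]. exists d.
    intros w Hw Hsim. apply (Hq w Hw). symmetry. rewrite <- (sim_pi w); auto.
Qed.

Lemma not_theta_cover (g : nat -> D M) :
  ~ supp M (theta S) t g ->
  forall p q, exists w, t w /\ pi (a_val M w) = p /\ pi (b_val M w) = q.
Proof.
  intros Hth p q. apply NNPP. intros Hn. apply Hth, supp_theta.
  destruct (pi_surj p) as [d <-], (pi_surj q) as [e <-]. exists d, e.
  intros w Hw [Ha Hb]. apply Hn. exists w.
  split; [exact Hw|]. split; symmetry; rewrite <- (sim_pi w); auto.
Qed.

(* If an injection [f] missed [q0], then on the worlds where [b = f a] the
   values of [a] and [b] determine each other and [b] avoids [q0], so by [eta]
   [a] avoids some class [q]; but the cover supplies such a world with [a = q]. *)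
Lemma Finite_of_eta_cover (g : nat -> D M) :
  supp M (eta S) t g ->
  (forall p q, exists w, t w /\ pi (a_val M w) = p /\ pi (b_val M w) = q) ->
  Finite Q.
Proof.
  intros Heta cover. apply Finite_of_Injective_Surjective.
  intros f f_inj q0. apply NNPP. intros q0_missed.
  set (u := fun w => t w /\ pi (b_val M w) = f (pi (a_val M w))).
  assert (ut : forall w, u w -> t w) by (intros w Hw; apply Hw).
  assert (Ha : avoids M (a_val M) u).
  { apply (proj1 (supp_eta S M t g) Heta u ut).
    - intros v vu. rewrite !determined_iff_constant by firstorder.
      intros Hv w w' Hw Hw'.
      rewrite (proj2 (vu w Hw)), (proj2 (vu w' Hw')), (Hv w w' Hw Hw'). reflexivity.
    - intros v vu. rewrite !determined_iff_constant by firstorder.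
      intros Hv w w' Hw Hw'. apply f_inj.
      rewrite <- (proj2 (vu w Hw)), <- (proj2 (vu w' Hw')). apply Hv; auto.
    - apply avoids_iff; [exact ut|]. exists q0. intros w [_ Hw] E.
      apply q0_missed. exists (pi (a_val M w)). congruence. }
  apply avoids_iff in Ha; [|exact ut]. destruct Ha as [q Hq].
  destruct (cover q (f q)) as [w [Hw [Ha Hb]]].
  apply (Hq w); [split; [exact Hw | congruence] | exact Ha].
Qed.

End Uniform_state.

Lemma id_valid_of_valid (S : signature) (alpha : form S) :
  valid (Imp (And (rho S) (eta S)) (IOr (lift alpha) (theta S))) ->
  id_valid (Imp (eta S) (IOr (lift alpha) (theta S))).
Proof.
  intros H M Hid s g t Hts Heta.
  apply (H M s g t Hts). split; [apply id_model_supp_rho, Hid | exact Heta].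
Qed.

Section Pair_model.

Variables (S : signature) (A : structure S).

Definition pair_fint (w : sdom A * sdom A) (f : fsym (ext_sig S)) :
  (Fin.t (farity (ext_sig S) f) -> sdom A) -> sdom A :=
  match f with
  | inl f => sfint A f
  | inr true => fun _ => fst w
  | inr false => fun _ => snd w
  end.

Definition pair_model : model (ext_sig S).
Proof.
  refine (@Build_model (ext_sig S) (sdom A * sdom A) (sdom A) _ (sdom_ne S A)
            (fun _ => spint A) pair_fint (fun _ => @eq (sdom A)) _ _ _ _).
  - destruct (sdom_ne S A) as [d]. exact (inhabits (d, d)).
  - intros w P u v Huv. replace v with u; [auto | extensionality i; apply Huv].
  - intros w f u v Huv. replace v with u; [auto | extensionality i; apply Huv].
  - intros [f|c] Hrigid w w' u; [reflexivity | contradiction].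
Defined.

Lemma pair_model_id : id_model pair_model.
Proof. intros w d e. reflexivity. Qed.

Lemma pair_model_sim (w : W pair_model) :
  True -> forall d e, sim pair_model w d e <-> id d = id e.
Proof. reflexivity. Qed.

Lemma pair_model_supp_eta (s : W pair_model -> Prop) (g : nat -> D pair_model) :
  Finite (sdom A) -> supp pair_model (eta S) s g.
Proof.
  intros HA. apply supp_eta. intros u _ _ Hba Hb.
  assert (id_surj : Surjective (@id (sdom A))) by (intros d; exists d; reflexivity).
  rewrite (avoids_iff S pair_model _ id _ id_surj pair_model_sim) in Hb |- *; auto.
  destruct Hb as [d0 Hd0]. apply NNPP. intros Ha.
  assert (a_onto : forall x, exists w, u w /\ fst w = x).
  { intros x. apply NNPP. intros Hx. apply Ha. exists x. intros w Hw E.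
    apply Hx. exists w. split; assumption. }
  destruct (choice _ a_onto) as [pick Hpick].
  assert (h_inj : Injective (fun x => snd (pick x))).
  { intros x y Hxy.
    set (v := fun w => w = pick x \/ w = pick y).
    assert (vu : forall w, v w -> u w) by (intros w [-> | ->]; apply Hpick).
    specialize (Hba v vu).
    rewrite !(determined_iff_constant S pair_model _ id _ pair_model_sim) in Hba by auto.
    rewrite <- (proj2 (Hpick x)), <- (proj2 (Hpick y)).
    apply Hba; unfold v; auto.
    intros w w' [-> | ->] [-> | ->]; auto. }
  assert (h_onto : Surjective (fun x => snd (pick x))).
  { exact (proj1 (Endo_Injective_Surjective HA (fun x y : sdom A => classic (x = y)) _) h_inj). }
  destruct (h_onto d0) as [x Hx].
  exact (Hd0 (pick x) (proj1 (Hpick x)) Hx).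
Qed.

Lemma pair_model_not_theta (g : nat -> D pair_model) :
  ~ supp pair_model (theta S) (fun _ => True) g.
Proof.
  intros Hth. apply supp_theta in Hth. destruct Hth as [d [e He]].
  apply (He (d, e) I). split; reflexivity.
Qed.

Lemma pair_model_supp_lift (phi : form S) (s : W pair_model -> Prop) (g : nat -> D pair_model) :
  is_classical phi ->
  supp pair_model (lift phi) s g <-> forall w, s w -> sat A phi g.
Proof.
  intros Hc.
  apply (supp_lift_iff_sat S pair_model (fun _ => True) (fun _ => A) (fun _ => id)).
  - intros w _ d. exists d. reflexivity.
  - exact pair_model_sim.
  - reflexivity.
  - reflexivity.
  - exact Hc.
  - intros w _. exact I.
Qed.

End Pair_model.

Lemma finitely_valid_of_id_valid (S : signature) (alpha : form S) :
  is_classical alpha ->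
  id_valid (Imp (eta S) (IOr (lift alpha) (theta S))) -> finitely_valid alpha.
Proof.
  intros Hc H A HA g.
  destruct (H (pair_model S A) (pair_model_id S A) (fun _ => True) g (fun _ => True)
              (fun _ _ => I) (pair_model_supp_eta S A _ g HA)) as [Halpha|Htheta].
  - exact (proj1 (pair_model_supp_lift S A alpha _ g Hc) Halpha (g 0, g 0) I).
  - contradiction (pair_model_not_theta S A g Htheta).
Qed.

Section Quotient_structure.

Variables (S : signature) (M : model (ext_sig S)) (w : W M) (R : D M -> D M -> Prop).

Definition quotient_structure : structure S := {|
  sdom := quot (D M) R;
  sdom_ne := match D_ne _ M with inhabits d => inhabits (cls R d) end;
  spint := fun (P : psym S) v => pint M w P (fun i => repr R (v i));
  sfint := fun (f : fsym S) v => cls R (fint M w (inl f) (fun i => repr R (v i)))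
|}.

Hypothesis sim_R : forall d e, sim M w d e <-> R d e.

Let R_equiv : Equivalence R.
Proof.
  pose proof (sim_equiv _ M w). split.
  - intros d. apply sim_R. reflexivity.
  - intros d e Hde. apply sim_R. symmetry. apply sim_R, Hde.
  - intros d e f Hde Hef. apply sim_R. transitivity e; apply sim_R; assumption.
Qed.

Lemma sim_repr_cls (d : D M) : sim M w (repr R (cls R d)) d.
Proof. apply sim_R, repr_cls, R_equiv. Qed.

Lemma quotient_structure_pint P (u : Fin.t (parity S P) -> D M) :
  pint M w P u <-> spint quotient_structure P (fun i => cls R (u i)).
Proof.
  pose proof (sim_equiv _ M w).
  cbn. split; apply (sim_cong_p _ M); intros i; [symmetry|]; apply sim_repr_cls.
Qed.

Lemma quotient_structure_fint f (u : Fin.t (farity S f) -> D M) :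
  cls R (fint M w (inl f) u) = sfint quotient_structure f (fun i => cls R (u i)).
Proof.
  pose proof (sim_equiv _ M w).
  cbn. apply cls_eq; [exact R_equiv|]. apply sim_R.
  apply (sim_cong_f _ M). intros i. symmetry. apply sim_repr_cls.
Qed.

End Quotient_structure.

Lemma valid_of_finitely_valid (S : signature) (alpha : form S) :
  is_classical alpha -> finitely_valid alpha ->
  valid (Imp (And (rho S) (eta S)) (IOr (lift alpha) (theta S))).
Proof.
  intros Hc Hfv M s g t Hts [Hrho Heta].
  destruct (classic (supp M (theta S) t g)) as [Hth|Hth]; [right; exact Hth | left].
  assert (t_inhabited : exists w0, t w0).
  { apply NNPP. intros Ht. apply Hth, supp_theta. destruct (D_ne _ M) as [d].
    exists d, d. intros w Hw. exfalso. eauto. }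
  destruct t_inhabited as [w0 Hw0].
  set (R := sim M w0).
  assert (sim_R : forall w, t w -> forall d e, sim M w d e <-> R d e)
    by (intros w Hw; apply (supp_rho_uniform S M t g Hrho); auto).
  assert (sim_cls : forall w, t w -> forall d e, sim M w d e <-> cls R d = cls R e).
  { intros w Hw d e. rewrite cls_eq by apply sim_equiv. apply sim_R, Hw. }
  assert (Q_finite : Finite (quot (D M) R)).
  { apply (Finite_of_eta_cover S M _ (cls R) t (cls_surj _ R) sim_cls g Heta).
    apply (not_theta_cover S M _ (cls R) t (cls_surj _ R) sim_cls g Hth). }
  apply (supp_lift_iff_sat S M t (fun w => quotient_structure S M w R) (fun _ => cls R)).
  - intros w _. apply cls_surj.
  - exact sim_cls.
  - intros w Hw P u. apply (quotient_structure_pint S M w R), sim_R, Hw.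
  - intros w Hw f u. apply (quotient_structure_fint S M w R), sim_R, Hw.
  - exact Hc.
  - intros w Hw. exact Hw.
  - intros w _. apply Hfv, Q_finite.
Qed.

Theorem mainTheorem7 (S : signature) (alpha : form S) :
  is_classical alpha -> sentence alpha ->
  (finitely_valid alpha <->
     id_valid (Imp (eta S) (IOr (lift alpha) (theta S))))
  /\
  (id_valid (Imp (eta S) (IOr (lift alpha) (theta S))) <->
     valid (Imp (And (rho S) (eta S)) (IOr (lift alpha) (theta S)))).
Proof.
  intros Hc _. split; split; intros H.
  - apply id_valid_of_valid, valid_of_finitely_valid; assumption.
  - apply finitely_valid_of_id_valid; assumption.
  - apply valid_of_finitely_valid, finitely_valid_of_id_valid; assumption.
  - apply id_valid_of_valid; assumption.
Qed.
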